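(* Let ${\tt E}$ be ${\tt CS}$ or ${\tt o}$. For all $\lambda j$-terms $t_0,t_1,u_0,u_1$: if $t_0\equiv_{\tt E}t_1$, $t_0\to^*_{\lambda j/{\tt E}}u_0$ and $t_1\to^*_{\lambda j/{\tt E}}u_1$, then there exist $v_0,v_1$ with $u_0\to^*_{\lambda j/{\tt E}}v_0$, $u_1\to^*_{\lambda j/{\tt E}}v_1$ and $v_0\equiv_{\tt E}v_1$.
   Context: $\lambda j$-terms are generated by $t,u::= x\mid \lambda x.t\mid t\,u\mid t[x/u]$; $\lambda x.t$ and $t[x/u]$ bind $x$ in $t$ (not in $u$), and terms are considered modulo $\alpha$-conversion. $\mathrm{fv}(t)$ is the set of free variables, $t\{x/u\}$ is capture-avoiding meta-level substitution, and $|t|_x$ is the number of free occurrences of $x$ in $t$. If $|t|_x=n\ge2$, $t_{[y]_x}$ denotes any term obtained from $t$ by replacing $k$ of the free occurrences of $x$ by a fresh variable $y$, for some $1\le k\le n-1$. ${\tt L}$ denotes a (possibly empty) list of jumps $[x_1/u_1]\dots[x_k/u_k]$. The rewriting rules, closed under all contexts, are: $({\tt dB})$ $(\lambda x.t){\tt L}\,u\to t[x/u]{\tt L}$ where no $x_i$ of ${\tt L}$ is free in $u$; $({\tt w})$ $t[x/u]\to t$ if $|t|_x=0$; $({\tt d})$ $t[x/u]\to t\{x/u\}$ if $|t|_x=1$; $({\tt c})$ $t[x/u]\to t_{[y]_x}[x/u][y/u]$ if $|t|_x\ge2$, $y$ fresh. $\to_{\lambda j}$ is the union of all four. $\equiv_{\tt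 CS}$ is the smallest equivalence closed under contexts containing $t[x/s][y/v]\sim t[y/v][x/s]$ whenever $x\notin\mathrm{fv}(v)$ and $y\notin\mathrm{fv}(s)$. $\equiv_{\tt o}$ is the smallest equivalence closed under contexts containing that equation together with $\lambda y.(t[x/s])\sim(\lambda y.t)[x/s]$ if $y\notin\mathrm{fv}(s)$, and $t[x/s]\,v\sim(t\,v)[x/s]$ if $x\notin\mathrm{fv}(v)$. For an equivalence ${\tt E}$, $t\to_{\lambda j/{\tt E}}u$ iff $t\equiv_{\tt E}t'\to_{\lambda j}u'\equiv_{\tt E}u$ for some $t',u'$. *)

(* lambda-j terms in de Bruijn representation (alpha-conversion
   is thus built in). Index 0 refers to the innermost binder; both
   [Lam t] and [Sub t u] (= t[x/u]) bind index 0 in t but not in u. *)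
From Stdlib Require Import Arith List Relations.

Inductive term : Type :=
| Var (n : nat)
| Lam (t : term)
| App (t u : term)
| Sub (t u : term).

Fixpoint lift (k c : nat) (t : term) : term :=
  match t with
  | Var n => if n <? c then Var n else Var (n + k)
  | Lam a => Lam (lift k (S c) a)
  | App a b => App (lift k c a) (lift k c b)
  | Sub a b => Sub (lift k (S c) a) (lift k c b)
  end.

(* subst d t u : capture-avoiding meta-level substitution t{d/u}, removing the
   binder of index d (indices above d are decremented) *)
Fixpoint subst (d : nat) (t u : term) : term :=
  match t with
  | Var n => if n <? d then Var n
             else if n =? d then lift d 0 u else Var (pred n)
  | Lam a => Lam (subst (S d) a u)
  | App a b => App (subst d a u) (subst d b u)
  | Sub a b => Sub (subst (S d) a u) (subst d b u)
  end.

Fixpoint occ (d : nat) (t : term) : nat :=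
  match t with
  | Var n => if n =? d then 1 else 0
  | Lam a => occ (S d) a
  | App a b => occ d a + occ d b
  | Sub a b => occ (S d) a + occ d b
  end.

Fixpoint swap (d : nat) (t : term) : term :=
  match t with
  | Var n => if n =? d then Var (S d) else if n =? S d then Var d else Var n
  | Lam a => Lam (swap (S d) a)
  | App a b => App (swap d a) (swap d b)
  | Sub a b => Sub (swap (S d) a) (swap d b)
  end.

(* t L, with L = [x1/u1]...[xk/uk] given as the list [u1;...;uk] *)
Definition appL (t : term) (L : list term) : term :=
  fold_left (fun acc u => Sub acc u) L t.

(* ren_some d t t' : t' is obtained from t by replacing some (possibly zero)
   free occurrences of x (index d in t and t') by a fresh variable y
   (index d+1 in t'); other free indices above d are shifted up by one. *)
Inductive ren_some : nat -> term -> term -> Prop :=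
| rs_bound d n : n < d -> ren_some d (Var n) (Var n)
| rs_free d n : d < n -> ren_some d (Var n) (Var (S n))
| rs_keep d : ren_some d (Var d) (Var d)
| rs_rename d : ren_some d (Var d) (Var (S d))
| rs_lam d a a' : ren_some (S d) a a' -> ren_some d (Lam a) (Lam a')
| rs_app d a a' b b' : ren_some d a a' -> ren_some d b b' ->
    ren_some d (App a b) (App a' b')
| rs_sub d a a' b b' : ren_some (S d) a a' -> ren_some d b b' ->
    ren_some d (Sub a b) (Sub a' b').

Inductive root_step : term -> term -> Prop :=
| r_dB (t : term) (L : list term) (u : term) :
    root_step (App (appL (Lam t) L) u) (appL (Sub t (lift (length L) 0 u)) L)
| r_w (t u : term) : occ 0 t = 0 -> root_step (Sub t u) (subst 0 t u)
| r_d (t u : term) : occ 0 t = 1 -> root_step (Sub t u) (subst 0 t u)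
| r_c (t t' u : term) : 2 <= occ 0 t -> ren_some 0 t t' ->
    1 <= occ 0 t' -> 1 <= occ 1 t' ->
    root_step (Sub t u) (Sub (Sub t' (lift 1 0 u)) u).

Inductive ctx (R : relation term) : relation term :=
| c_root t u : R t u -> ctx R t u
| c_lam t t' : ctx R t t' -> ctx R (Lam t) (Lam t')
| c_appl t t' u : ctx R t t' -> ctx R (App t u) (App t' u)
| c_appr t u u' : ctx R u u' -> ctx R (App t u) (App t u')
| c_subl t t' u : ctx R t t' -> ctx R (Sub t u) (Sub t' u)
| c_subr t u u' : ctx R u u' -> ctx R (Sub t u) (Sub t u').

Definition lj_step : relation term := ctx root_step.

Inductive eqkind : Type := CS | O.

(* the equations; side conditions x∉fv(v), y∉fv(s) are expressed by lifting *)
Inductive eq_ax : eqkind -> relation term :=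
| ax_cs (E : eqkind) (t s v : term) :
    eq_ax E (Sub (Sub t (lift 1 0 s)) v) (Sub (Sub (swap 0 t) (lift 1 0 v)) s)
| ax_lam (t s : term) :
    eq_ax O (Lam (Sub t (lift 1 0 s))) (Sub (Lam (swap 0 t)) s)
| ax_app (t s v : term) :
    eq_ax O (App (Sub t s) v) (Sub (App t (lift 1 0 v)) s).

Definition equivE (E : eqkind) : relation term :=
  clos_refl_sym_trans term (ctx (eq_ax E)).

Definition stepE (E : eqkind) (t u : term) : Prop :=
  exists t' u', equivE E t t' /\ lj_step t' u' /\ equivE E u' u.

Definition stepsE (E : eqkind) : relation term := clos_refl_trans term (stepE E).

(* The proof interprets lambda-j into the lambda-calculus.  The unfolding
   [unf t] executes every explicit substitution [t[x/u]] of [t] as a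
   meta-level substitution.  Three facts then carry the whole argument:
   - equivalent terms have the same unfolding ([equivE_unf]), since the
     equations only permute or move jumps without changing what they
     substitute;
   - a lambda-j/E step unfolds to zero or more beta-steps ([stepsE_betas]);
   - conversely every term lambda-j-reduces to its unfolding ([ljs_unf]) and
     beta-reduction is simulated by lambda-j ([betas_ljs]), using the rules
     w, d and c to execute a jump ([sub_to_subst]).
   Beta-reduction is confluent by the Tait--Martin-Löf method (parallel
   reduction with complete developments, [betas_confluent]).  Given the
   hypotheses of the theorem, the unfoldings of u0 and u1 are beta-reducts of
   the common unfolding of t0 and t1; they are joined by some w, and u0, u1
   both reduce to w in lambda-j. *)
From Pilot Require Import Defs.
From Stdlib Require Import Arith List Relations Lia FunctionalExtensionality.

Lemma rt_lift {A B : Type} (R : relation A) (S : relation B) (f : A -> B) :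
  (forall a b, R a b -> clos_refl_trans B S (f a) (f b)) ->
  forall a b, clos_refl_trans A R a b -> clos_refl_trans B S (f a) (f b).
Proof.
  intros HRS a b Hab; induction Hab.
  - now apply HRS.
  - apply rt_refl.
  - eapply rt_trans; eassumption.
Qed.

Lemma diamond_confluent {A : Type} (P : relation A) :
  (forall a b c, P a b -> P a c -> exists d, P b d /\ P c d) ->
  forall a b c, clos_refl_trans A P a b -> clos_refl_trans A P a c ->
  exists d, clos_refl_trans A P b d /\ clos_refl_trans A P c d.
Proof.
  intros Hdia.
  assert (strip : forall a b c, P a b -> clos_refl_trans A P a c ->
                  exists d, clos_refl_trans A P b d /\ P c d).
  { intros a b c Hab Hac; revert b Hab; induction Hac as [x y Hxy|x|x y z _ IH1 _ IH2];
      intros b Hb.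
    - destruct (Hdia _ _ _ Hb Hxy) as (d & Hbd & Hyd). eauto using rt_step.
    - eauto using rt_refl.
    - destruct (IH1 b Hb) as (d1 & Hbd1 & Hyd1).
      destruct (IH2 d1 Hyd1) as (d2 & Hd1d2 & Hzd2). eauto using rt_trans. }
  intros a b c Hab; revert c; induction Hab as [x y Hxy|x|x y z _ IH1 _ IH2]; intros c Hc.
  - destruct (strip _ _ _ Hxy Hc) as (d & Hyd & Hcd). eauto using rt_step.
  - eauto using rt_refl.
  - destruct (IH1 c Hc) as (d1 & Hyd1 & Hcd1).
    destruct (IH2 d1 Hyd1) as (d2 & Hzd2 & Hd1d2). eauto using rt_trans.
Qed.

Definition upr (xi : nat -> nat) (n : nat) : nat :=
  match n with 0 => 0 | S m => S (xi m) end.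

Fixpoint ren (xi : nat -> nat) (t : term) : term :=
  match t with
  | Var n => Var (xi n)
  | Lam a => Lam (ren (upr xi) a)
  | App a b => App (ren xi a) (ren xi b)
  | Sub a b => Sub (ren (upr xi) a) (ren xi b)
  end.

Definition ups (s : nat -> term) (n : nat) : term :=
  match n with 0 => Var 0 | S m => ren S (s m) end.

Fixpoint sb (s : nat -> term) (t : term) : term :=
  match t with
  | Var n => s n
  | Lam a => Lam (sb (ups s) a)
  | App a b => App (sb s a) (sb s b)
  | Sub a b => Sub (sb (ups s) a) (sb s b)
  end.

Definition scons (u : term) (s : nat -> term) (n : nat) : term :=
  match n with 0 => u | S m => s m end.

Ltac fusion_induction t :=
  induction t; intros; simpl;
  try match goal with IH : _ |- _ => rewrite IH end;
  try match goal with IH : _ |- _ => rewrite IH end;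
  try reflexivity; f_equal; f_equal; apply functional_extensionality;
  intros [|?]; simpl; try reflexivity.

Lemma ren_ren (t : term) (xi zeta : nat -> nat) :
  ren xi (ren zeta t) = ren (fun n => xi (zeta n)) t.
Proof. revert xi zeta; fusion_induction t. Qed.

Lemma sb_ren (t : term) (s : nat -> term) (xi : nat -> nat) :
  sb s (ren xi t) = sb (fun n => s (xi n)) t.
Proof. revert s xi; fusion_induction t. Qed.

Lemma ren_sb (t : term) (s : nat -> term) (xi : nat -> nat) :
  ren xi (sb s t) = sb (fun n => ren xi (s n)) t.
Proof. revert s xi; fusion_induction t; rewrite !ren_ren; reflexivity. Qed.

Lemma sb_sb (t : term) (s r : nat -> term) :
  sb s (sb r t) = sb (fun n => sb s (r n)) t.
Proof. revert s r; fusion_induction t; rewrite sb_ren, ren_sb; reflexivity. Qed.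

Lemma sb_id (s : nat -> term) (t : term) : (forall n, s n = Var n) -> sb s t = t.
Proof.
  intros Hs; replace s with Var by (extensionality n; auto); clear Hs.
  assert (Hup : ups Var = Var) by (extensionality n; destruct n; reflexivity).
  induction t; simpl; rewrite ?Hup; congruence.
Qed.

Lemma sb_beta (a b : term) (s : nat -> term) :
  sb s (sb (scons b Var) a) = sb (scons (sb s b) Var) (sb (ups s) a).
Proof.
  rewrite !sb_sb; f_equal; extensionality n; destruct n; simpl; try reflexivity.
  rewrite sb_ren; symmetry; now apply sb_id.
Qed.

Lemma ren_beta (a b : term) (xi : nat -> nat) :
  ren xi (sb (scons b Var) a) = sb (scons (ren xi b) Var) (ren (upr xi) a).
Proof.
  rewrite ren_sb, sb_ren; f_equal; extensionality n; destruct n; reflexivity.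
Qed.

Ltac nat_cases := repeat match goal with
  | |- context [?a <? ?b] => destruct (Nat.ltb_spec a b)
  | |- context [?a =? ?b] => destruct (Nat.eqb_spec a b)
  | |- context [?a <=? ?b] => destruct (Nat.leb_spec a b)
  end.

Definition lift_fun (k c n : nat) : nat := if n <? c then n else n + k.

Lemma lift_ren (t : term) (k c : nat) : lift k c t = ren (lift_fun k c) t.
Proof.
  assert (Hup : forall c, upr (lift_fun k c) = lift_fun k (S c)).
  { intros c'; extensionality n; destruct n; unfold lift_fun; simpl; try reflexivity.
    nat_cases; f_equal; lia. }
  revert c; induction t; intros; simpl; rewrite ?IHt, ?IHt1, ?IHt2, ?Hup; try reflexivity.
  unfold lift_fun; now destruct (n <? c).
Qed.

Lemma lift_zero (t : term) : lift 0 0 t = t.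
Proof.
  rewrite lift_ren, <- (sb_id Var (ren _ t)) by reflexivity.
  rewrite sb_ren; apply sb_id; intros n; unfold lift_fun; simpl; f_equal; lia.
Qed.

Definition subst_fun (d : nat) (u : term) (n : nat) : term :=
  if n <? d then Var n else if n =? d then lift d 0 u else Var (pred n).

Lemma subst_sb (t : term) (d : nat) (u : term) : subst d t u = sb (subst_fun d u) t.
Proof.
  assert (Hup : forall d, ups (subst_fun d u) = subst_fun (S d) u).
  { intros d'; extensionality n; destruct n; [reflexivity|].
    unfold ups, subst_fun; simpl; nat_cases; simpl; try reflexivity; try lia.
    - subst; rewrite !lift_ren, ren_ren; f_equal; extensionality x; unfold lift_fun; simpl; lia.
    - destruct n; [lia|reflexivity]. }
  revert d; induction t; intros; simpl; now rewrite ?IHt, ?IHt1, ?IHt2, ?Hup.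
Qed.

Lemma subst0_sb (t u : term) : subst 0 t u = sb (scons u Var) t.
Proof.
  rewrite subst_sb; f_equal; extensionality n; destruct n; unfold subst_fun; simpl;
    try reflexivity.
  rewrite lift_zero; reflexivity.
Qed.

Definition swap_fun (d n : nat) : nat :=
  if n =? d then S d else if n =? S d then d else n.

Lemma swap_ren (t : term) (d : nat) : swap d t = ren (swap_fun d) t.
Proof.
  assert (Hup : forall d, upr (swap_fun d) = swap_fun (S d)).
  { intros d'; extensionality n; destruct n; unfold swap_fun; simpl; try reflexivity.
    nat_cases; reflexivity. }
  revert d; induction t; intros; simpl; rewrite ?IHt, ?IHt1, ?IHt2, ?Hup; try reflexivity.
  unfold swap_fun; nat_cases; reflexivity.
Qed.

(* Undoing a split: identifying y (index d+1) with x (index d) again. *)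
Definition merge_fun (d n : nat) : nat := if n <=? d then n else pred n.

Lemma ren_some_merge (d : nat) (t t' : term) :
  ren_some d t t' -> t = ren (merge_fun d) t'.
Proof.
  assert (Hup : forall d, upr (merge_fun d) = merge_fun (S d)).
  { intros d'; extensionality n; destruct n; unfold merge_fun; simpl; try reflexivity.
    nat_cases; try lia; reflexivity. }
  induction 1; simpl; rewrite ?Hup; try congruence; unfold merge_fun; nat_cases; try lia;
    reflexivity.
Qed.

Lemma ren_some_none (t : term) (d : nat) :
  exists t', ren_some d t t' /\ occ d t' = occ d t /\ occ (S d) t' = 0.
Proof.
  revert d; induction t as [n|t IH|a IHa b IHb|a IHa b IHb]; intros d; simpl.
  - destruct (lt_eq_lt_dec n d) as [[Hn|<-]|Hn].
    + exists (Var n); split; [now apply rs_bound|cbn [occ]; split; nat_cases; lia].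
    + exists (Var n); split; [apply rs_keep|cbn [occ]; split; nat_cases; lia].
    + exists (Var (S n)); split; [now apply rs_free|cbn [occ]; split; nat_cases; lia].
  - destruct (IH (S d)) as (t' & ? & ? & ?).
    exists (Lam t'); simpl; split; [now constructor|lia].
  - destruct (IHa d) as (a' & ? & ? & ?), (IHb d) as (b' & ? & ? & ?).
    exists (App a' b'); simpl; split; [now constructor|lia].
  - destruct (IHa (S d)) as (a' & ? & ? & ?), (IHb d) as (b' & ? & ? & ?).
    exists (Sub a' b'); simpl; split; [now constructor|lia].
Qed.

Lemma ren_some_one (t : term) (d : nat) : 1 <= occ d t ->
  exists t', ren_some d t t' /\ occ d t' = occ d t - 1 /\ occ (S d) t' = 1.
Proof.
  revert d; induction t as [n|t IH|a IHa b IHb|a IHa b IHb]; intros d Hocc; simpl in *.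
  - destruct (Nat.eqb_spec n d) as [->|]; [|lia].
    exists (Var (S d)); split; [apply rs_rename|cbn [occ]; split; nat_cases; lia].
  - destruct (IH (S d) Hocc) as (t' & ? & ? & ?).
    exists (Lam t'); simpl; split; [now constructor|lia].
  - destruct (Nat.le_gt_cases 1 (occ d a)).
    + destruct (IHa d) as (a' & ? & ? & ?), (ren_some_none b d) as (b' & ? & ? & ?); auto.
      exists (App a' b'); simpl; split; [now constructor|lia].
    + destruct (IHb d) as (b' & ? & ? & ?), (ren_some_none a d) as (a' & ? & ? & ?); [lia|].
      exists (App a' b'); simpl; split; [now constructor|lia].
  - destruct (Nat.le_gt_cases 1 (occ (S d) a)).
    + destruct (IHa (S d)) as (a' & ? & ? & ?), (ren_some_none b d) as (b' & ? & ? & ?); auto.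
      exists (Sub a' b'); simpl; split; [now constructor|lia].
    + destruct (IHb d) as (b' & ? & ? & ?), (ren_some_none a (S d)) as (a' & ? & ? & ?);
        [lia|].
      exists (Sub a' b'); simpl; split; [now constructor|lia].
Qed.

Lemma occ_lift (u : term) (k c d : nat) : c <= d < c + k -> occ d (lift k c u) = 0.
Proof.
  revert c d; induction u; intros c d Hd; simpl.
  - nat_cases; simpl; nat_cases; lia.
  - apply IHu; lia.
  - rewrite IHu1, IHu2; lia.
  - rewrite IHu1, IHu2; lia.
Qed.

Lemma occ_subst_lift (t : term) (d : nat) (u : term) :
  occ d (subst d t (lift 1 0 u)) = occ (S d) t.
Proof.
  revert d; induction t; intros d; cbn [subst occ]; rewrite ?IHt, ?IHt1, ?IHt2;
    try reflexivity.
  nat_cases; cbn [occ]; nat_cases; try lia; subst.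
  replace (lift d 0 (lift 1 0 u)) with (lift (S d) 0 u).
  - rewrite occ_lift; lia.
  - rewrite !lift_ren, ren_ren; f_equal; extensionality x; unfold lift_fun; simpl; lia.
Qed.

(* Executing the two copies of a jump produced by rule c amounts to
   executing the original jump. *)
Lemma subst_split (t t' u : term) : ren_some 0 t t' ->
  subst 0 (subst 0 t' (lift 1 0 u)) u = subst 0 t u.
Proof.
  intros Hsplit; apply ren_some_merge in Hsplit; subst t.
  rewrite !subst0_sb, lift_ren, sb_sb, sb_ren; f_equal; extensionality n.
  destruct n as [|[|n]]; simpl; try reflexivity.
  rewrite sb_ren; apply sb_id; intros x; unfold lift_fun; simpl; now rewrite Nat.add_1_r.
Qed.

Section CtxClosure.
Variable R : relation term.
Notation reds := (clos_refl_trans term (ctx R)).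

Lemma reds_lam (a a' : term) : reds a a' -> reds (Lam a) (Lam a').
Proof. apply rt_lift; intros; now apply rt_step, c_lam. Qed.

Lemma reds_app (a a' b b' : term) : reds a a' -> reds b b' -> reds (App a b) (App a' b').
Proof.
  intros Ha Hb; apply rt_trans with (App a' b).
  - revert a a' Ha; apply (rt_lift _ _ (fun x => App x b)); intros; now apply rt_step, c_appl.
  - revert b b' Hb; apply (rt_lift _ _ (App a')); intros; now apply rt_step, c_appr.
Qed.

Lemma reds_sub (a a' b b' : term) : reds a a' -> reds b b' -> reds (Sub a b) (Sub a' b').
Proof.
  intros Ha Hb; apply rt_trans with (Sub a' b).
  - revert a a' Ha; apply (rt_lift _ _ (fun x => Sub x b)); intros; now apply rt_step, c_subl.
  - revert b b' Hb; apply (rt_lift _ _ (Sub a')); intros; now apply rt_step, c_subr.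
Qed.
End CtxClosure.

(* Beta-reduction on terms of Defs (jumps are inert constructors here). *)
Inductive beta_root : relation term :=
| br (a b : term) : beta_root (App (Lam a) b) (sb (scons b Var) a).

Notation beta := (ctx beta_root).
Notation betas := (clos_refl_trans term beta).

Lemma beta_ren (a b : term) (xi : nat -> nat) : beta a b -> beta (ren xi a) (ren xi b).
Proof.
  intros Hab; revert xi; induction Hab as [a b []| | | | |]; intros xi; simpl;
    [rewrite ren_beta; apply c_root, br|apply c_lam|apply c_appl|apply c_appr|apply c_subl
    |apply c_subr]; apply IHHab.
Qed.

Lemma beta_sb (a b : term) (s : nat -> term) : beta a b -> beta (sb s a) (sb s b).
Proof.
  intros Hab; revert s; induction Hab as [a b []| | | | |]; intros s; simpl;
    [rewrite sb_beta; apply c_root, br|apply c_lam|apply c_appl|apply c_appr|apply c_subl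
    |apply c_subr]; apply IHHab.
Qed.

Lemma betas_sb_pointwise (t : term) (s r : nat -> term) :
  (forall n, betas (s n) (r n)) -> betas (sb s t) (sb r t).
Proof.
  assert (Hup : forall s r, (forall n, betas (s n) (r n)) ->
                forall n, betas (ups s n) (ups r n)).
  { intros s' r' H [|n]; simpl; [apply rt_refl|].
    apply (rt_lift beta beta (ren S)); [intros; now apply rt_step, beta_ren|apply H]. }
  revert s r; induction t; intros s r Hsr; simpl;
    [apply Hsr|apply reds_lam|apply reds_app|apply reds_sub]; auto.
Qed.

Inductive par : relation term :=
| p_var n : par (Var n) (Var n)
| p_lam a a' : par a a' -> par (Lam a) (Lam a')
| p_app a a' b b' : par a a' -> par b b' -> par (App a b) (App a' b')
| p_sub a a' b b' : par a a' -> par b b' -> par (Sub a b) (Sub a' b')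
| p_beta a a' b b' : par a a' -> par b b' -> par (App (Lam a) b) (sb (scons b' Var) a').

Lemma par_refl (t : term) : par t t.
Proof. induction t; constructor; auto. Qed.

Lemma par_ren (a b : term) (xi : nat -> nat) : par a b -> par (ren xi a) (ren xi b).
Proof.
  intros Hab; revert xi; induction Hab; intros xi; simpl; try (constructor; auto).
  rewrite ren_beta; apply p_beta; auto.
Qed.

Lemma par_sb (a b : term) (s r : nat -> term) :
  par a b -> (forall n, par (s n) (r n)) -> par (sb s a) (sb r b).
Proof.
  assert (Hup : forall s r, (forall n, par (s n) (r n)) -> forall n, par (ups s n) (ups r n)).
  { intros s' r' H [|n]; simpl; [constructor|now apply par_ren]. }
  intros Hab; revert s r; induction Hab; intros s r Hsr; simpl; auto; try (constructor; auto).
  rewrite sb_beta; apply p_beta; auto.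
Qed.

Fixpoint cd (t : term) : term :=
  match t with
  | Var n => Var n
  | Lam a => Lam (cd a)
  | App (Lam a) b => sb (scons (cd b) Var) (cd a)
  | App a b => App (cd a) (cd b)
  | Sub a b => Sub (cd a) (cd b)
  end.

Lemma par_cd (a b : term) : par a b -> par b (cd a).
Proof.
  induction 1 as [| | a a' b b' Ha IHa Hb IHb| |a a' b b' Ha IHa Hb IHb]; simpl;
    try (constructor; auto; fail).
  - destruct a; try (constructor; auto; fail).
    inversion Ha; subst; inversion IHa; subst; apply p_beta; auto.
  - apply par_sb; auto; intros [|n]; simpl; auto using p_var.
Qed.

Lemma par_betas (a b : term) : par a b -> betas a b.
Proof.
  induction 1; auto using reds_lam, reds_app, reds_sub, rt_refl.
  apply rt_trans with (App (Lam a') b'); [auto using reds_app, reds_lam|].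
  apply rt_step, c_root, br.
Qed.

Lemma beta_par (a b : term) : beta a b -> par a b.
Proof.
  induction 1 as [a b []| | | | |]; constructor; auto using par_refl.
Qed.

Lemma betas_confluent (a b c : term) :
  betas a b -> betas a c -> exists d, betas b d /\ betas c d.
Proof.
  assert (to_par : forall x y, betas x y -> clos_refl_trans term par x y).
  { apply (rt_lift _ _ (fun x => x)); intros; now apply rt_step, beta_par. }
  assert (of_par : forall x y, clos_refl_trans term par x y -> betas x y).
  { apply (rt_lift _ _ (fun x => x)); exact par_betas. }
  intros Hab Hac.
  destruct (diamond_confluent par) with (a := a) (b := b) (c := c)
    as (d & Hbd & Hcd).
  - intros x y z Hxy Hxz; exists (cd x); split; now apply par_cd.
  - now apply to_par.
  - now apply to_par.
  - exists d; split; now apply of_par.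
Qed.

Fixpoint unf (t : term) : term :=
  match t with
  | Var n => Var n
  | Lam a => Lam (unf a)
  | App a b => App (unf a) (unf b)
  | Sub a b => sb (scons (unf b) Var) (unf a)
  end.

Lemma unf_ren (t : term) (xi : nat -> nat) : unf (ren xi t) = ren xi (unf t).
Proof.
  revert xi; induction t; intros xi; simpl; rewrite ?IHt, ?IHt1, ?IHt2; try reflexivity.
  rewrite sb_ren, ren_sb; f_equal; extensionality n; destruct n; reflexivity.
Qed.

Lemma unf_sb (t : term) (s : nat -> term) : unf (sb s t) = sb (fun n => unf (s n)) (unf t).
Proof.
  revert s; induction t; intros s; simpl; rewrite ?IHt, ?IHt1, ?IHt2; try reflexivity.
  - f_equal; f_equal; extensionality n; destruct n; simpl; [reflexivity|apply unf_ren].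
  - rewrite !sb_sb; f_equal; extensionality n; destruct n; simpl; try reflexivity.
    rewrite unf_ren, sb_ren; simpl; now rewrite sb_id.
Qed.

Lemma unf_subst0 (t u : term) : unf (subst 0 t u) = sb (scons (unf u) Var) (unf t).
Proof.
  rewrite subst0_sb, unf_sb; f_equal; extensionality n; destruct n; reflexivity.
Qed.

(* The substitution executed by a list of jumps [L], innermost jump first. *)
Fixpoint jumps_sb (L : list term) : nat -> term :=
  match L with
  | nil => Var
  | v :: L' => fun n => sb (jumps_sb L') (scons (unf v) Var n)
  end.

Lemma unf_appL (L : list term) (a : term) : unf (appL a L) = sb (jumps_sb L) (unf a).
Proof.
  revert a; induction L as [|v L IH]; intros a; simpl.
  - symmetry; now apply sb_id.
  - unfold appL in *; simpl; rewrite IH; simpl; now rewrite sb_sb.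
Qed.

Lemma jumps_sb_outer (L : list term) (n : nat) : jumps_sb L (n + length L) = Var n.
Proof.
  revert n; induction L as [|v L IH]; intros n; simpl.
  - f_equal; lia.
  - replace (n + S (length L)) with (S (n + length L)) by lia; apply IH.
Qed.

Lemma jumps_sb_beta (L : list term) (a u : term) :
  sb (jumps_sb L) (sb (scons (unf (lift (length L) 0 u)) Var) a)
  = sb (scons (unf u) Var) (sb (ups (jumps_sb L)) a).
Proof.
  rewrite !sb_sb; f_equal; extensionality n; destruct n as [|n]; simpl.
  - rewrite lift_ren, unf_ren, sb_ren; apply sb_id; intros x.
    unfold lift_fun; simpl; apply jumps_sb_outer.
  - rewrite sb_ren; simpl; now rewrite sb_id.
Qed.

(* A root lambda-j step unfolds to at most one beta-step: dB becomes beta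
   (the jumps of L commute with the created substitution), w and d are
   already executed in the unfolding, and c does not change it. *)
Lemma root_step_betas (a b : term) : root_step a b -> betas (unf a) (unf b).
Proof.
  intros [t L u|t u _|t u _|t t' u _ Hsplit _ _]; simpl.
  - rewrite !unf_appL; simpl; apply rt_step.
    rewrite jumps_sb_beta; apply c_root, br.
  - rewrite unf_subst0; apply rt_refl.
  - rewrite unf_subst0; apply rt_refl.
  - pose proof (f_equal unf (subst_split t t' u Hsplit)) as Hunf.
    rewrite !unf_subst0 in Hunf; rewrite Hunf; apply rt_refl.
Qed.

Lemma lj_step_betas (a b : term) : lj_step a b -> betas (unf a) (unf b).
Proof.
  induction 1 as [a b Hab|a a' _ IH|a a' b _ IH|a b b' _ IH|a a' b _ IH|a b b' _ IH];
    simpl.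
  - now apply root_step_betas.
  - now apply reds_lam.
  - apply reds_app; [exact IH|apply rt_refl].
  - apply reds_app; [apply rt_refl|exact IH].
  - revert IH; apply (rt_lift beta beta (sb _)); intros; now apply rt_step, beta_sb.
  - apply betas_sb_pointwise; intros [|n]; simpl; [exact IH|apply rt_refl].
Qed.

(* The equations of CS and o only move jumps past constructors or past each
   other (under the side conditions expressed by lifting), so both sides
   unfold to the same term. *)
Lemma eq_ax_unf (E : eqkind) (a b : term) : eq_ax E a b -> unf a = unf b.
Proof.
  intros [? t s v|t s|t s v]; simpl; rewrite ?swap_ren, ?lift_ren, ?unf_ren.
  - rewrite !sb_sb, sb_ren; f_equal; extensionality n; destruct n as [|[|n]]; simpl;
      rewrite ?sb_ren; try reflexivity.
    + apply sb_id; intros x; unfold lift_fun; simpl; now rewrite Nat.add_1_r.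
    + symmetry; apply sb_id; intros x; unfold lift_fun; simpl; now rewrite Nat.add_1_r.
  - f_equal; rewrite sb_ren; f_equal; extensionality n; destruct n as [|[|n]]; simpl;
      try reflexivity.
    f_equal; extensionality x; unfold lift_fun; simpl; lia.
  - f_equal; rewrite sb_ren; simpl; symmetry; apply sb_id; intros x; unfold lift_fun;
      simpl; now rewrite Nat.add_1_r.
Qed.

Lemma equivE_unf (E : eqkind) (a b : term) : equivE E a b -> unf a = unf b.
Proof.
  induction 1 as [a b Hab| | |]; try congruence.
  induction Hab; simpl; try congruence; now apply (eq_ax_unf E).
Qed.

Lemma stepsE_betas (E : eqkind) (a b : term) : stepsE E a b -> betas (unf a) (unf b).
Proof.
  apply rt_lift; intros x y (x' & y' & Hxx' & Hx'y' & Hy'y).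
  rewrite (equivE_unf E _ _ Hxx'), <- (equivE_unf E _ _ Hy'y).
  now apply lj_step_betas.
Qed.

Notation ljs := (clos_refl_trans term (ctx root_step)).

(* A jump is executed by w or d when x occurs at most once; otherwise rule c
   splits off one occurrence, the jump on the remaining occurrences is
   executed by induction, and d executes the split-off copy. *)
Lemma sub_to_subst (t u : term) : ljs (Sub t u) (subst 0 t u).
Proof.
  remember (occ 0 t) as n eqn:Hn; revert t u Hn.
  induction n as [n IH] using lt_wf_ind; intros t u Hn.
  destruct (Nat.lt_ge_cases n 2) as [Hsmall|Hbig].
  - apply rt_step, c_root; destruct n as [|[|]]; [apply r_w|apply r_d|lia]; auto.
  - destruct (ren_some_one t 0) as (t' & Hsplit & Hx & Hy); [lia|].
    apply rt_trans with (Sub (Sub t' (lift 1 0 u)) u).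
    { apply rt_step, c_root, r_c; auto; lia. }
    apply rt_trans with (Sub (subst 0 t' (lift 1 0 u)) u).
    { apply reds_sub; [apply (IH (n - 1))|apply rt_refl]; lia. }
    rewrite <- (subst_split t t' u Hsplit).
    apply rt_step, c_root, r_d; now rewrite occ_subst_lift.
Qed.

Lemma ljs_unf (t : term) : ljs t (unf t).
Proof.
  induction t; simpl; auto using rt_refl, reds_lam, reds_app.
  apply rt_trans with (Sub (unf t1) (unf t2)); [now apply reds_sub|].
  rewrite <- subst0_sb; apply sub_to_subst.
Qed.

(* A beta-step is a dB-step (with empty jump list) followed by executing
   the created jump. *)
Lemma beta_ljs (a b : term) : beta a b -> ljs a b.
Proof.
  induction 1 as [? ? [a b]| | | | |]; auto using reds_lam, reds_app, reds_sub, rt_refl.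
  apply rt_trans with (Sub a (lift 0 0 b)); [apply rt_step, c_root, (r_dB a nil b)|].
  rewrite lift_zero, <- subst0_sb; apply sub_to_subst.
Qed.

Lemma ljs_stepsE (E : eqkind) (a b : term) : ljs a b -> stepsE E a b.
Proof.
  apply (rt_lift _ _ (fun x => x)); intros x y Hxy.
  apply rt_step; exists x, y; split; [apply rst_refl|split; [exact Hxy|apply rst_refl]].
Qed.


Lemma betas_stepsE (E : eqkind) (t w : term) : betas (unf t) w -> stepsE E t w.
Proof.
  intros Hw; apply ljs_stepsE, rt_trans with (unf t); [apply ljs_unf|].
  revert Hw; apply (rt_lift _ _ (fun x => x)); exact beta_ljs.
Qed.

Theorem theorem25 (E : eqkind) (t0 t1 u0 u1 : term) :
  equivE E t0 t1 -> stepsE E t0 u0 -> stepsE E t1 u1 ->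
  exists v0 v1, stepsE E u0 v0 /\ stepsE E u1 v1 /\ equivE E v0 v1.
Proof.
  intros Ht Hu0 Hu1.
  apply stepsE_betas in Hu0; apply stepsE_betas in Hu1.
  rewrite <- (equivE_unf E _ _ Ht) in Hu1.
  destruct (betas_confluent _ _ _ Hu0 Hu1) as (w & Hw0 & Hw1).
  exists w, w; split; [|split]; [now apply betas_stepsE..|apply rst_refl].
Qed.
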